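(* Let $n\ge2$, $p\in(0,1/2)$, $q=1-p$, $\tilde q=1-2p$, and $\beta_n=2^{1/(n-1)}$. Let $X_1,\dots,X_n$ be i.i.d. with $P(X_i=1)=P(X_i=-1)=p$, $P(X_i=0)=1-2p$, and independently let $U_1,\dots,U_n$ be i.i.d. uniform on $[0,1]$ with order statistics $T_1<\dots<T_n$, $T_i$ being the arrival time of $X_i$. For $x\in[0,1]$, the $x$-strategy selects the first $X_i\neq0$ with $T_i>x$ (selecting nothing, i.e. losing, if there is none); it wins if the selected value is $1$ and no later-arriving variable equals $1$, or the selected value is $-1$ and no later-arriving variable equals $-1$. Then its win probability is $$p_n(x)=2\bigl((q+px)^n-(\tilde q+2px)^n\bigr).$$ If $p\ge\frac{\beta_n-1}{2\beta_n-1}$, then $p_n$ attains its maximum over $[0,1]$ at $x_n^\star=\frac{1}{p}\cdot\frac{q-\tilde q\beta_n}{2\beta_n-1}\in[0,1]$, with maximal value $$p_n(x_n^\star)=2(2\beta_n-1)^{1-n},$$ which does not depend on $p$. Moreover $p_n(x_n^\star)$ is decreasing in $n$ and converges to $1/2$ as $n\to\infty$. *)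

From Stdlib Require Import Reals Lra Lia ZArith List.
Open Scope R_scope.

Definition vals : list Z := (-1 :: 0 :: 1 :: nil)%Z.

(* All value sequences of length n (the X's listed in arrival order). *)
Fixpoint allseqs (n : nat) : list (list Z) :=
  match n with
  | O => nil :: nil
  | S m => flat_map (fun v => map (fun s => v :: s) (allseqs m)) vals
  end.

Definition wt (p : R) (v : Z) : R := if Z.eqb v 0 then 1 - 2 * p else p.

Definition seq_prob (p : R) (s : list Z) : R :=
  fold_right (fun v acc => wt p v * acc) 1 s.

(* Outcome of the x-strategy, given the (arrival-ordered) values of the
   variables arriving after time x: select the first nonzero one; win iff
   no later-arriving variable has the same value; lose if none is nonzero. *)
Fixpoint wins (s : list Z) : bool :=
  match s with
  | nil => false
  | v :: t => if Z.eqb v 0 then wins t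
              else negb (existsb (fun w => Z.eqb w v) t)
  end.

(* Since the X_i are i.i.d. and
   independent of the U_j, the values listed in arrival order are i.i.d.
   with the law above, and the number k of arrivals at times <= x is
   Binomial(n, x) (= #{j | U_j <= x}), independent of the values. *)
Definition win_prob (n : nat) (p x : R) : R :=
  sum_f_R0 (fun k =>
     C n k * x ^ k * (1 - x) ^ (n - k) *
     fold_right Rplus 0
       (map (fun s => seq_prob p s * (if wins (skipn k s) then 1 else 0))
            (allseqs n)))
   n.

Definition beta_n (n : nat) : R := Rpower 2 (1 / (INR n - 1)).

Definition p_n (n : nat) (p x : R) : R :=
  2 * ((1 - p + p * x) ^ n - (1 - 2 * p + 2 * p * x) ^ n).

Definition x_star (n : nat) (p : R) : R :=
  (1 / p) * (((1 - p) - (1 - 2 * p) * beta_n n) / (2 * beta_n n - 1)).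

Definition v_star (n : nat) : R :=
  2 * Rpower (2 * beta_n n - 1) (1 - INR n).

From Stdlib Require Import Reals Lra Lia ZArith List.
Open Scope R_scope.

(* Given that k variables arrive before x, the remaining n - k values are i.i.d., and the
   strategy wins on them with probability 2((1-p)^m - (1-2p)^m): a leading 0 is skipped,
   a leading +-1 wins iff it never reappears.  Averaging over the binomial k gives p_n.
   Writing a = 1 - p + p x and c = 2a - 1, p_n = 2(a^n - c^n) is stationary where a = b c
   with b^(n-1) = 2, and comparing the factorisations a^n - c^n = (a - c) h(a, c), with h
   homogeneous of degree n - 1, shows this is the maximum.  The optimal value is
   2 / (2 b - 1)^(n-1); writing b = y^(n-1) with y = 2^(1/((n-1) n)), its decrease in n is
   the log-concavity of j |-> 2 y^j - 1, and its limit is 2 exp(-g'(0) ln 2) = 1/2 for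
   g(t) = ln(2 e^t - 1). *)

Definition sum_list (l : list R) : R := fold_right Rplus 0 l.

Lemma sum_list_app l1 l2 : sum_list (l1 ++ l2) = sum_list l1 + sum_list l2.
Proof. induction l1 as [|a l1 IH]; simpl; [ring | rewrite IH; ring]. Qed.

Lemma sum_list_map_ext (A : Type) (f g : A -> R) l :
  (forall s, f s = g s) -> sum_list (map f l) = sum_list (map g l).
Proof. intros Hfg; induction l as [|a l IH]; simpl; [|rewrite Hfg, IH]; reflexivity. Qed.

Lemma sum_list_map_scal (A : Type) (c : R) (f : A -> R) l :
  sum_list (map (fun s => c * f s) l) = c * sum_list (map f l).
Proof. induction l as [|a l IH]; simpl; [ring | rewrite IH; ring]. Qed.

Definition expect (p : R) (n : nat) (F : list Z -> R) : R :=
  sum_list (map (fun s => seq_prob p s * F s) (allseqs n)).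

Lemma expect_cons p m F :
  expect p (S m) F =
  p * expect p m (fun s => F ((-1)%Z :: s)) + (1 - 2 * p) * expect p m (fun s => F (0%Z :: s))
  + p * expect p m (fun s => F (1%Z :: s)).
Proof.
  unfold expect; simpl allseqs; simpl flat_map.
  rewrite !map_app, !sum_list_app, !map_map; simpl.
  rewrite <- !sum_list_map_scal.
  rewrite Rplus_0_r, <- Rplus_assoc; f_equal; [f_equal|];
    apply sum_list_map_ext; intros s; unfold wt; simpl; ring.
Qed.

Lemma expect_const p n c : expect p n (fun _ => c) = c.
Proof. induction n as [|n IH]; [unfold expect; simpl; ring | rewrite expect_cons, IH; ring]. Qed.

Lemma expect_skipn p k n G : (k <= n)%nat ->
  expect p n (fun s => G (skipn k s)) = expect p (n - k) G.
Proof.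
  revert n; induction k as [|k IH]; intros n Hkn.
  - rewrite Nat.sub_0_r; reflexivity.
  - destruct n as [|n]; [lia|].
    rewrite expect_cons; simpl skipn; rewrite !IH by lia; simpl; ring.
Qed.

Lemma expect_notin p v m : v = 1%Z \/ v = (-1)%Z ->
  expect p m (fun s => if negb (existsb (fun w => Z.eqb w v) s) then 1 else 0) = (1 - p) ^ m.
Proof.
  intros Hv; induction m as [|m IH]; [unfold expect; simpl; ring|].
  rewrite expect_cons.
  destruct Hv; subst v; simpl; rewrite expect_const, IH; ring.
Qed.

Lemma expect_wins p m :
  expect p m (fun s => if wins s then 1 else 0) = 2 * ((1 - p) ^ m - (1 - 2 * p) ^ m).
Proof.
  induction m as [|m IH]; [unfold expect; simpl; ring|].
  rewrite expect_cons; simpl wins.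
  rewrite (expect_notin p (-1)), (expect_notin p 1), IH by auto; simpl; ring.
Qed.

Lemma win_prob_eq_p_n n p x : win_prob n p x = p_n n p x.
Proof.
  unfold win_prob, p_n.
  rewrite (sum_eq _ (fun k => C n k * x ^ k * ((1 - x) * (1 - p)) ^ (n - k) * 2 -
                              C n k * x ^ k * ((1 - x) * (1 - 2 * p)) ^ (n - k) * 2)).
  - rewrite minus_sum, <- !scal_sum, <- !binomial.
    replace (x + (1 - x) * (1 - p)) with (1 - p + p * x) by ring.
    replace (x + (1 - x) * (1 - 2 * p)) with (1 - 2 * p + 2 * p * x) by ring.
    ring.
  - intros k Hk.
    change (fold_right Rplus 0 ?l) with (sum_list l).
    change (sum_list _) with (expect p n (fun s => if wins (skipn k s) then 1 else 0)).
    rewrite (expect_skipn p k n (fun s => if wins s then 1 else 0)), expect_wins, !Rpow_mult_distr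
      by lia.
    ring.
Qed.

(* [hom_sum a c m] is the complete homogeneous polynomial of degree [m - 1] in [a, c]. *)
Fixpoint hom_sum (a c : R) (m : nat) : R :=
  match m with O => 0 | S k => a ^ k + c * hom_sum a c k end.

Lemma pow_sub_pow_factor a c m : a ^ m - c ^ m = (a - c) * hom_sum a c m.
Proof.
  induction m as [|m IH]; simpl; [ring|].
  replace (a * a ^ m - c * c ^ m) with ((a - c) * a ^ m + c * (a ^ m - c ^ m)) by ring.
  rewrite IH; ring.
Qed.

Lemma hom_sum_ge0 a c m : 0 <= a -> 0 <= c -> 0 <= hom_sum a c m.
Proof.
  intros Ha Hc; induction m as [|m IH]; simpl; [lra|].
  pose proof (pow_le a m Ha); pose proof (Rmult_le_pos c _ Hc IH); lra.
Qed.

Lemma hom_sum_le a c a' c' m : 0 <= a <= a' -> 0 <= c <= c' ->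
  hom_sum a c m <= hom_sum a' c' m.
Proof.
  intros Ha Hc; induction m as [|m IH]; simpl; [lra|].
  pose proof (pow_incr a a' m Ha); pose proof (hom_sum_ge0 a c m ltac:(lra) ltac:(lra)).
  assert (c * hom_sum a c m <= c' * hom_sum a' c' m) by (apply Rmult_le_compat; lra).
  lra.
Qed.

Lemma hom_sum_scale k a c m : k * hom_sum (k * a) (k * c) m = k ^ m * hom_sum a c m.
Proof.
  induction m as [|m IH]; simpl; [ring|].
  rewrite Rpow_mult_distr.
  transitivity (k * (k ^ m * a ^ m) + k * c * (k * hom_sum (k * a) (k * c) m)); [ring|].
  rewrite IH; ring.
Qed.

(* On the line [w - c = 2 (u - a)], [a^n - c^n] is maximal where [a = b c] with [b^(n-1) = 2];
   after factoring both differences of powers, compare [hom_sum] at [(u, a)] and [(b w, b c)]. *)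
Lemma pow_sub_pow_le_critical n b u w a c :
  1 / 2 <= b -> b ^ n = 2 * b -> u = b * w -> w - c = 2 * (u - a) ->
  0 <= a -> 0 <= c -> 0 <= w ->
  a ^ n - c ^ n <= u ^ n - w ^ n.
Proof.
  intros Hb Hbn Hu Hline Ha Hc Hw.
  assert (Hdiff : (u ^ n - w ^ n) - (a ^ n - c ^ n) =
                  (u - a) * (hom_sum u a n - 2 * hom_sum w c n)).
  { replace ((u ^ n - w ^ n) - (a ^ n - c ^ n)) with ((u ^ n - a ^ n) - (w ^ n - c ^ n)) by ring.
    rewrite !pow_sub_pow_factor; replace (w - c) with (2 * (u - a)) by lra; ring. }
  assert (Hscale : b * hom_sum u (b * c) n = 2 * b * hom_sum w c n)
    by (rewrite Hu, hom_sum_scale, Hbn; reflexivity).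
  assert (0 <= (u - a) * (hom_sum u a n - 2 * hom_sum w c n)); [|lra].
  destruct (Rle_lt_dec a u) as [Hau | Hua].
  - assert (hom_sum u (b * c) n <= hom_sum u a n)
      by (apply hom_sum_le; nra).
    assert (0 <= hom_sum u a n - 2 * hom_sum w c n) by nra.
    apply Rmult_le_pos; lra.
  - assert (hom_sum u a n <= hom_sum u (b * c) n)
      by (apply hom_sum_le; nra).
    assert (hom_sum u a n - 2 * hom_sum w c n <= 0) by nra.
    nra.
Qed.

Lemma INR_pred n : (1 <= n)%nat -> INR n - 1 = INR (n - 1).
Proof. intros Hn; rewrite minus_INR by exact Hn; reflexivity. Qed.

Lemma beta_n_gt1 n : (2 <= n)%nat -> 1 < beta_n n.
Proof.
  intros Hn; unfold beta_n; rewrite <- (Rpower_O 2) at 1 by lra.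
  apply Rpower_lt; [lra|].
  rewrite INR_pred by lia; apply Rdiv_lt_0_compat; [lra|apply lt_0_INR; lia].
Qed.

Lemma beta_n_pow_pred n : (2 <= n)%nat -> beta_n n ^ (n - 1) = 2.
Proof.
  intros Hn; pose proof (beta_n_gt1 n Hn).
  assert (0 < INR (n - 1)) by (apply lt_0_INR; lia).
  rewrite <- Rpower_pow by lra; unfold beta_n.
  rewrite Rpower_mult, INR_pred by lia.
  replace (1 / INR (n - 1) * INR (n - 1)) with 1 by (field; lra).
  apply Rpower_1; lra.
Qed.

Lemma beta_n_pow n : (2 <= n)%nat -> beta_n n ^ n = 2 * beta_n n.
Proof.
  intros Hn; replace n with (S (n - 1)) at 2 by lia; simpl.
  rewrite beta_n_pow_pred by exact Hn; ring.
Qed.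

Lemma v_star_pow n : (2 <= n)%nat -> v_star n = 2 / (2 * beta_n n - 1) ^ (n - 1).
Proof.
  intros Hn; pose proof (beta_n_gt1 n Hn); unfold v_star.
  replace (1 - INR n) with (- INR (n - 1)) by (rewrite <- INR_pred by lia; ring).
  rewrite Rpower_Ropp, Rpower_pow by lra; reflexivity.
Qed.

Section Optimum.

Variables (n : nat) (p : R).
Hypotheses (Hn : (2 <= n)%nat) (Hp : 0 < p < 1 / 2).

Let b := beta_n n.
Let Hb : 1 < b := beta_n_gt1 n Hn.
Let Hbn : b ^ n = 2 * b := beta_n_pow n Hn.

Lemma x_star_arg1 : 1 - p + p * x_star n p = b / (2 * b - 1).
Proof. unfold x_star; fold b; field; lra. Qed.

Lemma x_star_arg2 : 1 - 2 * p + 2 * p * x_star n p = 1 / (2 * b - 1).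
Proof. unfold x_star; fold b; field; lra. Qed.

Lemma x_star_mem : p >= (b - 1) / (2 * b - 1) -> 0 <= x_star n p <= 1.
Proof.
  intros Hpb.
  assert (Hlow : b - 1 <= p * (2 * b - 1)).
  { apply Rge_le in Hpb; apply (Rmult_le_compat_r (2 * b - 1)) in Hpb; [|lra].
    replace ((b - 1) / (2 * b - 1) * (2 * b - 1)) with (b - 1) in Hpb by (field; lra); lra. }
  assert (Hx : x_star n p * (p * (2 * b - 1)) = (1 - p) - (1 - 2 * p) * b)
    by (unfold x_star; fold b; field; lra).
  assert (0 < p * (2 * b - 1)) by nra.
  split; apply (Rmult_le_reg_r (p * (2 * b - 1))); auto; rewrite Hx; nra.
Qed.

Lemma p_n_le_x_star x : 0 <= x <= 1 -> p_n n p x <= p_n n p (x_star n p).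
Proof.
  intros Hx.
  unfold p_n; rewrite x_star_arg1, x_star_arg2.
  apply Rmult_le_compat_l; [lra|].
  apply (pow_sub_pow_le_critical n b); try lra.
  - field; lra.
  - nra.
  - nra.
  - apply Rlt_le, Rdiv_lt_0_compat; lra.
Qed.

Lemma p_n_x_star : p_n n p (x_star n p) = v_star n.
Proof.
  unfold p_n; rewrite x_star_arg1, x_star_arg2, v_star_pow by exact Hn; fold b.
  assert (Hsplit : (2 * b - 1) ^ n = (2 * b - 1) * (2 * b - 1) ^ (n - 1))
    by (replace n with (S (n - 1)) at 1 by lia; reflexivity).
  assert (0 < (2 * b - 1) ^ (n - 1)) by (apply pow_lt; lra).
  unfold Rdiv; rewrite !Rpow_mult_distr, pow1, Hbn, pow_inv, Hsplit.
  field; lra.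
Qed.

End Optimum.

Lemma pow_lt_compat_pos x y k : 0 < x < y -> (0 < k)%nat -> x ^ k < y ^ k.
Proof.
  intros Hxy Hk; rewrite <- !Rpower_pow by lra.
  apply Rlt_Rpower_l; [apply lt_0_INR, Hk | exact Hxy].
Qed.

(* Induction on [m]: multiply the next instance by [r m ^ S m] and use [r (m+2) r m < r (m+1)^2]. *)
Lemma log_concave_pow_lt (r : nat -> R) m :
  (forall j, 0 < r j) -> r 0%nat = 1 -> (forall j, r (S (S j)) * r j < r (S j) ^ 2) ->
  (1 <= m)%nat -> r (S m) ^ m < r m ^ S m.
Proof.
  intros Hpos H0 Hconc Hm.
  enough (Hstep : forall k, r (S k) ^ k <= r k ^ S k -> r (S (S k)) ^ S k < r (S k) ^ S (S k)).
  { induction m as [|m IH]; [lia|].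
    apply Hstep; destruct m as [|m].
    - rewrite H0; simpl; lra.
    - apply Rlt_le, IH; lia. }
  intros k Hk.
  pose proof (pow_lt (r k) (S k) (Hpos k)) as Hrk.
  apply (Rmult_lt_reg_r (r k ^ S k)); [exact Hrk|].
  rewrite <- Rpow_mult_distr.
  apply Rlt_le_trans with ((r (S k) ^ 2) ^ S k).
  - apply pow_lt_compat_pos; [split; [apply Rmult_lt_0_compat|]; auto | lia].
  - rewrite <- pow_mult.
    replace (2 * S k)%nat with (S (S k) + k)%nat by lia; rewrite pow_add.
    apply Rmult_le_compat_l; [apply pow_le, Rlt_le, Hpos | exact Hk].
Qed.

Lemma two_pow_sub_one_log_concave y j : 1 < y ->
  (2 * y ^ S (S j) - 1) * (2 * y ^ j - 1) < (2 * y ^ S j - 1) ^ 2.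
Proof.
  intros Hy; simpl; assert (0 < y ^ j) by (apply pow_lt; lra).
  assert (0 < y ^ j * ((y - 1) * (y - 1))) by (apply Rmult_lt_0_compat; nra).
  nra.
Qed.

Lemma beta_n_S m : beta_n (S m) = Rpower 2 (1 / INR m).
Proof. unfold beta_n; rewrite S_INR; f_equal; f_equal; ring. Qed.

Lemma Rpower_root_pow x k l : 0 < x -> (0 < k)%nat -> (0 < l)%nat ->
  Rpower x (1 / (INR k * INR l)) ^ l = Rpower x (1 / INR k).
Proof.
  intros Hx Hk Hl; pose proof (lt_0_INR k Hk); pose proof (lt_0_INR l Hl).
  rewrite <- Rpower_pow by apply exp_pos.
  rewrite Rpower_mult; f_equal; field; lra.
Qed.

Lemma v_star_decreasing n : (2 <= n)%nat -> v_star (S n) < v_star n.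
Proof.
  intros Hn; destruct n as [|m]; [lia|].
  set (y := Rpower 2 (1 / (INR m * INR (S m)))).
  assert (Hy : 1 < y).
  { assert (0 < INR m * INR (S m)) by (apply Rmult_lt_0_compat; apply lt_0_INR; lia).
    unfold y; rewrite <- (Rpower_O 2) at 1 by lra.
    apply Rpower_lt; [lra | apply Rdiv_lt_0_compat; lra]. }
  assert (Hb1 : beta_n (S m) = y ^ S m)
    by (unfold y; rewrite Rpower_root_pow by (lra || lia); apply beta_n_S).
  assert (Hb2 : beta_n (S (S m)) = y ^ m)
    by (unfold y; rewrite Rmult_comm, Rpower_root_pow by (lra || lia); apply beta_n_S).
  rewrite !v_star_pow, Hb1, Hb2 by lia.
  replace (S m - 1)%nat with m by lia.
  assert (Hr : forall j, 0 < 2 * y ^ j - 1)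
    by (intros j; pose proof (pow_R1_Rle y j ltac:(lra)); lra).
  pose proof (log_concave_pow_lt (fun j => 2 * y ^ j - 1) m Hr
                ltac:(simpl; ring) (fun j => two_pow_sub_one_log_concave y j Hy) ltac:(lia))
    as Hlt.
  unfold Rdiv; apply Rmult_lt_compat_l; [lra|].
  apply Rinv_lt_contravar; [apply Rmult_lt_0_compat; apply pow_lt; auto | exact Hlt].
Qed.

Lemma Un_cv_difference_quotient (f : R -> R) l (t : nat -> R) :
  derivable_pt_lim f 0 l -> f 0 = 0 -> Un_cv t 0 -> (forall m, t m <> 0) ->
  Un_cv (fun m => f (t m) / t m) l.
Proof.
  intros Hf Hf0 Ht Ht0 eps Heps.
  destruct (Hf eps Heps) as [delta Hdelta].
  destruct (Ht delta (cond_pos delta)) as [N HN].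
  exists N; intros m Hm; unfold Rdist.
  specialize (HN m Hm); unfold Rdist in HN; rewrite Rminus_0_r in HN.
  specialize (Hdelta (t m) (Ht0 m) HN).
  rewrite Rplus_0_l, Hf0, Rminus_0_r in Hdelta; exact Hdelta.
Qed.

Lemma derivable_pt_lim_ln_two_exp_sub_one :
  derivable_pt_lim (fun t => ln (2 * exp t - 1)) 0 2.
Proof.
  assert (Hin : derivable_pt_lim (fun t => 2 * exp t - 1) 0 (2 * exp 0 - 0)).
  { apply (derivable_pt_lim_minus (fun t => 2 * exp t) (fun _ => 1)).
    - apply (derivable_pt_lim_scal exp), derivable_pt_lim_exp.
    - apply derivable_pt_lim_const. }
  assert (Hout : derivable_pt_lim ln (2 * exp 0 - 1) (/ 1)).
  { rewrite exp_0; replace (2 * 1 - 1) with 1 by ring; apply derivable_pt_lim_ln; lra. }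
  pose proof (derivable_pt_lim_comp _ ln _ _ _ Hin Hout) as H.
  rewrite exp_0 in H; replace (/ 1 * (2 * 1 - 0)) with 2 in H by field; exact H.
Qed.

Lemma ln2_div_INR_cv : Un_cv (fun m => ln 2 / INR (m + 1)) 0.
Proof.
  pose proof ln_lt_2.
  apply Un_cv_ext with (fun m => / (INR (m + 1) / ln 2)).
  { intros m; assert (0 < INR (m + 1)) by (apply lt_0_INR; lia); field; split; lra. }
  apply cv_infty_cv_0; intros M.
  destruct (INR_unbounded (M * ln 2)) as [N HN]; exists N; intros m Hm.
  assert (INR N <= INR (m + 1)) by (apply le_INR; lia).
  apply (Rmult_lt_reg_r (ln 2)); [|unfold Rdiv; rewrite Rmult_assoc, Rinv_l]; lra.
Qed.

Lemma v_star_cv : Un_cv (fun m => v_star (m + 2)) (1 / 2).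
Proof.
  pose proof ln_lt_2.
  set (t m := ln 2 / INR (m + 1)).
  set (F z := 2 * exp (- ln 2 * z)).
  assert (Ht0 : forall m, t m <> 0).
  { intros m; assert (0 < INR (m + 1)) by (apply lt_0_INR; lia).
    apply Rgt_not_eq, Rdiv_lt_0_compat; lra. }
  assert (HF : continuity_pt F 2) by (unfold F; reg).
  pose proof (continuity_seq F _ 2 HF
    (Un_cv_difference_quotient _ 2 t derivable_pt_lim_ln_two_exp_sub_one
       ltac:(cbv beta; rewrite exp_0; replace (2 * 1 - 1) with 1 by ring; apply ln_1)
       ln2_div_INR_cv Ht0)) as Hcv.
  replace (F 2) with (1 / 2) in Hcv.
  2: { unfold F; replace (- ln 2 * 2) with (- (ln 2 + ln 2)) by ring.
       rewrite exp_Ropp, exp_plus, exp_ln by lra; field. }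
  apply Un_cv_ext with (2 := Hcv); intros m.
  assert (0 < INR (m + 1)) by (apply lt_0_INR; lia).
  assert (HINR : INR (m + 2) - 1 = INR (m + 1)) by (rewrite !plus_INR; simpl; ring).
  assert (Hbeta : beta_n (m + 2) = exp (t m))
    by (unfold beta_n, Rpower, t; rewrite HINR; f_equal; field; lra).
  unfold v_star, F; rewrite Hbeta; unfold Rpower; do 2 f_equal.
  replace (1 - INR (m + 2)) with (- INR (m + 1)) by lra.
  unfold t; field; split; lra.
Qed.

Theorem mainTheorem9 :
  (forall (n : nat) (p : R), (2 <= n)%nat -> 0 < p < 1 / 2 ->
     (forall x, 0 <= x <= 1 -> win_prob n p x = p_n n p x) /\
     (p >= (beta_n n - 1) / (2 * beta_n n - 1) ->
        0 <= x_star n p <= 1 /\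
        (forall x, 0 <= x <= 1 -> p_n n p x <= p_n n p (x_star n p)) /\
        p_n n p (x_star n p) = v_star n)) /\
  (forall n : nat, (2 <= n)%nat -> v_star (S n) < v_star n) /\
  Un_cv (fun m => v_star (m + 2)) (1 / 2).
Proof.
  split; [|split].
  - intros n p Hn Hp; split.
    + intros x _; apply win_prob_eq_p_n.
    + intros Hpb; split; [|split].
      * apply x_star_mem; assumption.
      * apply p_n_le_x_star; assumption.
      * apply p_n_x_star; assumption.
  - exact v_star_decreasing.
  - exact v_star_cv.
Qed.
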